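(* Let $(L,\vee,\wedge,f,g,0,1)$ be a BDLGC-algebra. Then there exists a GC-frame $\mathcal{F}=(X,\leq,R)$ such that $(L,\vee,\wedge,f,g,0,1)$ is isomorphic to a subalgebra of the complex algebra $\mathbb{BDL}_{\rm GC}(\mathcal{F})=(\mathcal{T}_\leq,\cup,\cap,{}^\blacktriangle,{}^\blacktriangledown,\emptyset,X)$. If $L$ is finite, then $(L,\vee,\wedge,f,g,0,1)$ is isomorphic to $\mathbb{BDL}_{\rm GC}(\mathcal{F})$.
   Context: A BDLGC-algebra $(L,\vee,\wedge,f,g,0,1)$ is a bounded distributive lattice $(L,\vee,\wedge,0,1)$ with maps $f,g\colon L\to L$ forming an order-preserving Galois connection: $f(a)\leq b\iff a\leq g(b)$ for all $a,b\in L$. A GC-frame $(X,\leq,R)$ is a set $X$ with a quasiorder $\leq$ and a relation $R\subseteq X\times X$ such that $x\leq x'$, $x\,R\,y$, $y'\leq y$ imply $x'\,R\,y'$. $\mathcal{T}_\leq$ is the set of upward $\leq$-closed subsets of $X$. For $A\subseteq X$: $A^\blacktriangle=\{x\mid x\,R\,y\text{ for some }y\in A\}$ and $A^\blacktriangledown=\{x\mid \text{for all }y,\ y\,R\,x\text{ implies }y\in A\}$. The complex algebra $\mathbb{BDL}_{\rm GC}(\mathcal{F})$ is $(\mathcal{T}_\leq,\cup,\cap,{}^\blacktriangle,{}^\blacktriangledown,\emptyset,X)$; isomorphisms preserve $\vee,\wedge,f,g,0,1$ with $f\leftrightarrow{}^\blacktriangle$, $g\leftrightarrow{}^\blacktriangledown$.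 *)

From mathcomp Require Import all_boot all_order.
Set Implicit Arguments. Unset Strict Implicit. Unset Printing Implicit Defensive.
Import Order.TTheory.
Local Open Scope order_scope.

(* BDLGC-algebra: L is a bounded distributive lattice (tbDistrLatticeType),
   f g : L -> L form an order-preserving Galois connection. *)
Definition galois_connection d (L : tbDistrLatticeType d) (f g : L -> L) : Prop :=
  forall a b : L, (f a <= b) = (a <= g b).

Definition finite_carrier (T : eqType) : Prop := exists s : seq T, forall x, x \in s.

Definition gc_frame (X : Type) (le R : X -> X -> Prop) : Prop :=
  (forall x, le x x) /\
  (forall x y z, le x y -> le y z -> le x z) /\
  (forall x x' y y', le x x' -> R x y -> le y' y -> R x' y').

(* Subsets of X are predicates; T_le = upward le-closed subsets. *)
Definition upset (X : Type) (le : X -> X -> Prop) (A : X -> Prop) : Prop :=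
  forall x x', le x x' -> A x -> A x'.

Definition blacktriangle_up (X : Type) (R : X -> X -> Prop) (A : X -> Prop) : X -> Prop :=
  fun x => exists y, R x y /\ A y.

Definition blacktriangle_down (X : Type) (R : X -> X -> Prop) (A : X -> Prop) : X -> Prop :=
  fun x => forall y, R y x -> A y.

Definition seteq (X : Type) (A B : X -> Prop) : Prop := forall x, A x <-> B x.

(* h : L -> T_le is a BDLGC-homomorphism into the complex algebra
   (T_le, union, intersection, ▲, ▼, empty, X): values are upsets and
   the operations are preserved (f <-> ▲, g <-> ▼). *)
Definition complex_hom d (L : tbDistrLatticeType d) (f g : L -> L)
  (X : Type) (le R : X -> X -> Prop) (h : L -> X -> Prop) : Prop :=
  (forall a, upset le (h a)) /\
  (forall a b, seteq (h (a `|` b)) (fun x => h a x \/ h b x)) /\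
  (forall a b, seteq (h (a `&` b)) (fun x => h a x /\ h b x)) /\
  (forall a, seteq (h (f a)) (blacktriangle_up R (h a))) /\
  (forall a, seteq (h (g a)) (blacktriangle_down R (h a))) /\
  seteq (h \bot) (fun _ => False) /\
  seteq (h \top) (fun _ => True).

(* Embedding = injective homomorphism (iso onto a subalgebra). *)
Definition complex_embedding d (L : tbDistrLatticeType d) (f g : L -> L)
  (X : Type) (le R : X -> X -> Prop) (h : L -> X -> Prop) : Prop :=
  complex_hom f g le R h /\ (forall a b, seteq (h a) (h b) -> a = b).

Definition complex_iso d (L : tbDistrLatticeType d) (f g : L -> L)
  (X : Type) (le R : X -> X -> Prop) (h : L -> X -> Prop) : Prop :=
  complex_embedding f g le R h /\
  (forall U : X -> Prop, upset le U -> exists a, seteq (h a) U).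

(* Represent L in its prime filter spectrum, with x R y iff f maps y into x.
   The prime filter theorem (Zorn) separates a from b whenever a is not below
   b, which gives injectivity; applied to the principal filter of a and the
   ideal of elements c with f c outside x, it yields an R-successor of x
   containing a whenever f a lies in x; applied to the filter generated by
   the image of x under f and the principal ideal of a, it yields an
   R-predecessor of x avoiding a whenever g a is not in x.  In a finite
   lattice every filter is principal, so an upset U of prime filters is the
   image of the join of all c whose prime filters all lie in U. *)
From mathcomp Require Import all_boot all_order.
From mathcomp Require Import boolp classical_sets.
Set Implicit Arguments. Unset Strict Implicit. Unset Printing Implicit Defensive.
Import Order.TTheory.
Local Open Scope order_scope.

Section Filters.
Variables (d : Order.disp_t) (L : tbDistrLatticeType d).

Record is_filter (F : L -> Prop) : Prop := IsFilter {
  filter1 : F \top;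
  filterS : forall a b, a <= b -> F a -> F b;
  filterI : forall a b, F a -> F b -> F (a `&` b) }.

Record is_ideal (I : L -> Prop) : Prop := IsIdeal {
  ideal0 : I \bot;
  idealS : forall a b, a <= b -> I b -> I a;
  idealU : forall a b, I a -> I b -> I (a `|` b) }.

Record prime_filter (P : L -> Prop) : Prop := PrimeFilter {
  prime_filter_filter :> is_filter P;
  prime_filter_proper : ~ P \bot;
  prime_filterU : forall a b, P (a `|` b) -> P a \/ P b }.

Lemma principal_filter a : is_filter (fun b => a <= b).
Proof.
split=> [|b c bc ab|b c ab ac]; first exact: lex1.
  exact: le_trans bc.
by rewrite lexI ab ac.
Qed.

Lemma principal_ideal b : is_ideal (fun a => a <= b).
Proof.
split=> [|a c ac cb|a c ab cb]; first exact: le0x.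
  exact: le_trans cb.
by rewrite leUx ab cb.
Qed.

Lemma filter_image (h : L -> L) F :
  {homo h : a b / a <= b} -> is_filter F -> is_filter (fun c => exists2 b, F b & h b <= c).
Proof.
move=> h_mono [F1 FS FI]; split; first by exists \top; rewrite ?lex1.
  by move=> a c ac [b Fb hba]; exists b; last exact: le_trans ac.
move=> a c [b Fb hba] [b' Fb' hbc]; exists (b `&` b'); first exact: FI.
by rewrite lexI (le_trans (h_mono _ _ (leIl _ _)) hba) (le_trans (h_mono _ _ (leIr _ _)) hbc).
Qed.

Lemma ideal_preimage_compl (h : L -> L) P : prime_filter P ->
  {morph h : a b / a `|` b} -> h \bot = \bot -> is_ideal (fun c => ~ P (h c)).
Proof.
move=> [[_ PS _] P0 PU] hU h0; split; first by rewrite h0.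
  move=> a b ab nPhb Pha; apply: nPhb; apply: PS Pha.
  by rewrite -(join_r ab) hU leUl.
by move=> a b nPa nPb; rewrite hU => /PU [].
Qed.

Lemma filter_bigcup_chain (D : set (L -> Prop)) : (exists G, D G) ->
  (forall G, D G -> is_filter G) -> total_on D subset ->
  is_filter (fun x => exists2 G, D G & G x).
Proof.
move=> [G0 DG0] Dfilter Dtotal; split; first by exists G0; last exact: (filter1 (Dfilter _ DG0)).
  by move=> a b ab [G DG Ga]; exists G; last exact: (filterS (Dfilter _ DG) ab Ga).
move=> a b [G DG Ga] [H DH Hb].
have [GH|HG] := Dtotal _ _ DG DH.
  by exists H; last exact: (filterI (Dfilter _ DH) (GH _ Ga) Hb).
by exists G; last exact: (filterI (Dfilter _ DG) Ga (HG _ Hb)).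
Qed.

Lemma maximal_filter_exists F I : is_filter F -> (forall x, F x -> ~ I x) ->
  exists M, [/\ is_filter M, (forall x, F x -> M x), (forall x, M x -> ~ I x) &
    forall N, is_filter N -> (forall x, M x -> N x) -> (forall x, N x -> ~ I x) ->
    forall x, N x -> M x].
Proof.
move=> Ffilter FI.
pose extends G := [/\ is_filter G, forall x, F x -> G x & forall x, G x -> ~ I x].
pose R (G H : {G | extends G}) := `[< forall x, sval G x -> sval H x >].
have [[M [Mfilter FM MI]] Mmax] : exists M, premaximal R M.
  apply: (@ZL_preorder _ (exist _ F (And3 Ffilter (fun _ => id) FI))).
  - by move=> G; apply/asboolP.
  - by move=> G H K /asboolP GH /asboolP HK; apply/asboolP => x /GH /HK.
  move=> C Ctot.
  pose D H := H = F \/ exists2 G, C G & sval G = H.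
  have Dextends H : D H -> extends H by case=> [->|[[G ?] _ <-]].
  have Dtotal : total_on D subset.
    have DF H : D H -> forall x, F x -> H x by move/Dextends=> [].
    move=> G H [->|[G' CG' <-]] DH; first by left; apply: DF.
    case: DH => [->|[H' CH' <-]]; first by right; apply: DF; right; exists G'.
    by case: (Ctot _ _ CG' CH') => /asboolP; [left|right].
  (* Adding F to the chain keeps it a chain and makes it nonempty. *)
  have Ufilter := filter_bigcup_chain (ex_intro _ F (or_introl erefl))
    (fun H DH => let: And3 Hfilter _ _ := Dextends H DH in Hfilter) Dtotal.
  have Uextends : extends (fun x => exists2 H, D H & H x).
    split=> // [x Fx|x [H /Dextends [_ _ HI] Hx]]; last exact: HI.
    by exists F; first left.
  exists (exist _ _ Uextends) => G CG; apply/asboolP => x Gx.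
  by exists (sval G) => //; right; exists G.
exists M; split=> // N Nfilter MN NI.
have Nextends : extends N by split=> // x /FM /MN.
by move/asboolP: (Mmax (exist _ N Nextends) (asboolT MN)).
Qed.

Lemma maximal_filter_prime M I : is_ideal I -> is_filter M -> (forall x, M x -> ~ I x) ->
  (forall N, is_filter N -> (forall x, M x -> N x) -> (forall x, N x -> ~ I x) ->
    forall x, N x -> M x) ->
  prime_filter M.
Proof.
move=> [I0 IS IU] Mfilter MI Mmax; split=> // [M0|a b Mab]; first exact: MI M0 I0.
have escape c : ~ M c -> exists2 y, M y & exists2 i, I i & y `&` c <= i.
  (* The filter generated by M and c meets I, by maximality of M. *)
  move=> nMc; apply: contrapT => noI; apply: nMc.
  have Nfilter := @filter_image (fun y => y `&` c) M (fun y z yz => leI2 yz (lexx c)) Mfilter.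
  apply: (Mmax _ Nfilter); first by move=> x Mx; exists x; rewrite ?leIl.
    by move=> x [y My ycx] Ix; apply: noI; exists y => //; exists x.
  by exists \top; [exact: (filter1 Mfilter) | rewrite meet1x].
have [Ma|nMa] := pselect (M a); first by left.
have [Mb|nMb] := pselect (M b); first by right.
have [y1 My1 [i1 Ii1 le1]] := escape a nMa.
have [y2 My2 [i2 Ii2 le2]] := escape b nMb.
have My : M ((y1 `&` y2) `&` (a `|` b)).
  by apply: (filterI Mfilter) => //; apply: (filterI Mfilter).
case: (MI _ My); apply: (IS _ (i1 `|` i2)); last exact: IU.
rewrite meetUr leU2 //; first by apply: le_trans le1; rewrite leI2 // leIl.
by apply: le_trans le2; rewrite leI2 // leIr.
Qed.

Theorem prime_filter_theorem F I : is_filter F -> is_ideal I -> (forall x, F x -> ~ I x) ->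
  exists P, [/\ prime_filter P, forall x, F x -> P x & forall x, P x -> ~ I x].
Proof.
move=> Ffilter Iideal FI.
have [M [Mfilter FM MI Mmax]] := maximal_filter_exists Ffilter FI.
by exists M; split=> //; apply: maximal_filter_prime Iideal Mfilter MI Mmax.
Qed.

Lemma prime_filter_separation a b : ~ a <= b -> exists P, [/\ prime_filter P, P a & ~ P b].
Proof.
move=> nab.
have [|P [Pprime aP bP]] := prime_filter_theorem (principal_filter a) (principal_ideal b).
  by move=> x ax xb; apply: nab; apply: le_trans xb.
exists P; split=> //; first exact: aP (lexx a).
by move=> Pb; exact: bP Pb (lexx b).
Qed.

Lemma filter_meets F (r : seq L) : is_filter F -> F (\meet_(c <- r | `[< F c >]) c).
Proof.
move=> [F1 _ FI]; elim/big_ind: _ => // c; exact: asboolW.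
Qed.

Lemma prime_filter_joins P (r : seq L) (p : pred L) : prime_filter P ->
  P (\join_(c <- r | p c) c) -> exists2 c, c \in r & p c /\ P c.
Proof.
move=> [_ P0 PU] Pr; apply: contrapT => noc; move: Pr; rewrite big_seq_cond.
elim/big_ind: _ => // [a b nPa nPb /PU [] //|c /andP [cr pc] Pc].
by apply: noc; exists c.
Qed.

Record spectrum := Point { point_set :> L -> Prop; point_prime : prime_filter point_set }.

End Filters.

Section GaloisConnection.
Variables (d : Order.disp_t) (L : tbDistrLatticeType d) (f g : L -> L).
Hypothesis fg : galois_connection f g.

Lemma gc_homo : {homo f : a b / a <= b}.
Proof. by move=> a b ab; rewrite fg (le_trans ab) // -fg. Qed.

Lemma gc_counit a : f (g a) <= a.
Proof. by rewrite fg. Qed.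

Lemma gc_join : {morph f : a b / a `|` b}.
Proof.
move=> a b; apply/le_anti; rewrite fg leUx -!fg leUl leUr /=.
by rewrite leUx !gc_homo ?leUl ?leUr.
Qed.

Lemma gc_bot : f \bot = \bot.
Proof. by apply/eqP; rewrite -lex0 fg le0x. Qed.

End GaloisConnection.

Section CanonicalFrame.
Variables (d : Order.disp_t) (L : tbDistrLatticeType d) (f g : L -> L).
Hypothesis fg : galois_connection f g.

Definition spectrum_le (x y : spectrum L) := forall a, x a -> y a.

Definition canonical_rel (x y : spectrum L) := forall a, y a -> x (f a).

Definition canonical_embedding (a : L) (x : spectrum L) := x a.

Lemma canonical_gc_frame : gc_frame spectrum_le canonical_rel.
Proof.
split=> [x a //|]; split=> [x y z xy yz a /xy /yz //|x x' y y' xx' Rxy y'y a].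
by move=> /y'y /Rxy /xx'.
Qed.

Lemma canonical_embedding_f a :
  seteq (canonical_embedding (f a)) (blacktriangle_up canonical_rel (canonical_embedding a)).
Proof.
move=> x; split=> [xfa|[y [Rxy ya]]]; last exact: Rxy.
have xI := ideal_preimage_compl (point_prime x) (gc_join fg) (gc_bot fg).
have [|P [Pprime aP PxI]] := prime_filter_theorem (principal_filter a) xI.
  by move=> c ac; apply; apply: filterS (gc_homo fg ac) xfa; apply: point_prime.
exists (Point Pprime); split; last exact: aP (lexx a).
by move=> c Pc; apply: contrapT; exact: PxI.
Qed.

Lemma canonical_embedding_g a :
  seteq (canonical_embedding (g a)) (blacktriangle_down canonical_rel (canonical_embedding a)).
Proof.
move=> x; split=> [xga y Ryx|Rxa].
  by apply: filterS (gc_counit fg a) (Ryx _ xga); apply: point_prime.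
apply: contrapT => nxga.
have xF := filter_image (gc_homo fg) (point_prime x).
have [|P [Pprime xP Pa]] := prime_filter_theorem xF (principal_ideal a).
  move=> c [b xb fbc] ca; apply: nxga; apply: filterS xb; first exact: point_prime.
  by rewrite -fg (le_trans fbc).
by apply: Pa (lexx a); apply: (Rxa (Point Pprime)) => b xb; apply: xP; exists b.
Qed.

Lemma canonical_complex_hom : complex_hom f g spectrum_le canonical_rel canonical_embedding.
Proof.
split; first by move=> a x y; apply.
split.
  move=> a b x; split; first exact: prime_filterU (point_prime x) _ _.
  by case; apply: filterS; rewrite ?leUl ?leUr //; apply: point_prime.
split.
  move=> a b x; split; last by case; apply: filterI; apply: point_prime.
  by move=> xab; split; apply: filterS xab; rewrite ?leIl ?leIr //; apply: point_prime.
split; first exact: canonical_embedding_f.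
split; first exact: canonical_embedding_g.
split=> x; split=> //; last by move=> _; exact: filter1 (point_prime x).
exact: prime_filter_proper (point_prime x).
Qed.

Lemma canonical_complex_embedding :
  complex_embedding f g spectrum_le canonical_rel canonical_embedding.
Proof.
split=> [|a b hab]; first exact: canonical_complex_hom.
apply/le_anti/andP; split; apply: contrapT => /prime_filter_separation [P [Pprime Pa nPb]];
  apply: nPb; [exact: (hab (Point Pprime)).1 | exact: (hab (Point Pprime)).2].
Qed.

Lemma canonical_complex_iso : finite_carrier L ->
  complex_iso f g spectrum_le canonical_rel canonical_embedding.
Proof.
move=> [s sL]; split=> [|U Uup]; first exact: canonical_complex_embedding.
exists (\join_(c <- s | `[< forall x : spectrum L, x c -> U x >]) c) => x; split.
  by move=> /(prime_filter_joins (point_prime x)) [c _ [/asboolP cU xc]]; exact: cU.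
move=> Ux; have xm := filter_meets s (point_prime x).
apply: filterS xm; first exact: point_prime.
apply: joins_sup_seq => //; apply/asboolP => y ym; apply: Uup Ux => b xb.
by apply: filterS ym; [exact: point_prime | exact: meets_inf_seq (sL b) (asboolT xb)].
Qed.

End CanonicalFrame.

Theorem proposition3p9 (d : Order.disp_t) (L : tbDistrLatticeType d) (f g : L -> L) :
  galois_connection f g ->
  exists (X : Type) (le R : X -> X -> Prop),
    gc_frame le R /\
    (exists h : L -> X -> Prop, complex_embedding f g le R h) /\
    (finite_carrier L -> exists h : L -> X -> Prop, complex_iso f g le R h).
Proof.
move=> fg; exists (spectrum L), (@spectrum_le _ L), (canonical_rel f).
split; first exact: canonical_gc_frame.
split; first by exists (@canonical_embedding _ L); exact: canonical_complex_embedding.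
by move=> Lfin; exists (@canonical_embedding _ L); exact: canonical_complex_iso.
Qed.
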